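(* Let $(\mathcal F,d)$ be a metric space, $\gamma\in(0,\infty]$, and $\Sigma=(\Sigma_M)_{M\in\mathbb N}$ a sequence of non-empty subsets of $\mathcal F$ which is $\gamma$-encodable. For $\alpha,\beta>0$ let $\mathcal A^\alpha(\mathcal F,\Sigma,\beta)=\{f\in\mathcal F:\sup_{M\ge1}M^\alpha d(f,\Sigma_M)\le\beta\}$, where $d(f,\Sigma_M)=\inf_{g\in\Sigma_M}d(f,g)$, and assume it is non-empty. Then $\gamma^*_e(\mathcal A^\alpha(\mathcal F,\Sigma,\beta))\ge\min(\alpha,\gamma)$.
   Context: A finite $X\subset\mathcal C$ is an $\varepsilon$-covering of $\mathcal C$ if every point of $\mathcal C$ is within distance $\varepsilon$ of some point of $X$; $N(\mathcal C,d,\varepsilon)$ is the minimal size of such a covering ($+\infty$ if none), $H=\log_2N$, and $\gamma^*_e(\mathcal C)=\sup\{\gamma>0:H(\mathcal C,d,\varepsilon)=O(\varepsilon^{-1/\gamma})\text{ as }\varepsilon\to0\}$ ($0$ if empty). For $\gamma,h>0$, a $(\gamma,h)$-encoding of $\Sigma$ is a sequence $(\Sigma(\gamma,h)_M)_M$ such that for some $c_1,c_2>0$ and all $M$, $\Sigma(\gamma,h)_M$ is a $c_1M^{-\gamma}$-covering of $\Sigma_M$ with $\log_2|\Sigma(\gamma,h)_M|\le c_2M^{1+h}$. $\Sigma$ is $\gamma$-encodable if it admits a $(\gamma,h)$-encoding for every $h>0$, and $\infty$-encodable if $\gamma$-encodable for all $\gamma>0$. *)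

From HB Require Import structures.
From mathcomp Require Import all_boot all_order all_algebra.
From mathcomp Require Import all_classical all_reals all_analysis.
From Stdlib Require List.
Set Implicit Arguments. Unset Strict Implicit. Unset Printing Implicit Defensive.
Import Order.TTheory GRing.Theory Num.Theory.
Local Open Scope classical_set_scope.
Local Open Scope ring_scope.

Section Defs.
Variables (R : realType) (T : Type) (d : T -> T -> R).

Definition is_metric : Prop :=
  (forall x y, 0 <= d x y) /\ (forall x y, d x y = 0 <-> x = y) /\
  (forall x y, d x y = d y x) /\ (forall x y z, d x z <= d x y + d y z).

Definition is_covering (C : set T) (eps : R) (X : seq T) : Prop :=
  (forall x, List.In x X -> C x) /\
  (forall y, C y -> exists2 x, List.In x X & d y x <= eps).

(* covering number N(C,d,eps) (+oo if no finite covering) *)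
Definition covering_number (C : set T) (eps : R) : \bar R :=
  ereal_inf [set ((size X)%:R)%:E | X in [set X | is_covering C eps X]].

Definition metric_entropy (C : set T) (eps : R) : \bar R :=
  match covering_number C eps with
  | r%:E => (ln r / ln 2)%:E
  | +oo%E => +oo%E
  | -oo%E => -oo%E
  end.

Definition entropy_bigO (C : set T) (g : R) : Prop :=
  exists c : R, exists2 e0 : R, 0 < e0 &
    forall eps : R, 0 < eps -> eps < e0 ->
      (metric_entropy C eps <= (c * eps `^ (- g^-1))%:E)%E.

(* optimal exponent gamma*_e(C); the extra 0 realizes "0 if empty" *)
Definition optimal_exponent (C : set T) : \bar R :=
  ereal_sup ([set 0%E] `|`
             [set g%:E | g in [set g : R | 0 < g /\ entropy_bigO C g]]).

Definition encoding (Sigma : nat -> set T) (g h : R) (E : nat -> seq T) : Prop :=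
  exists2 c1 : R, 0 < c1 & exists2 c2 : R, 0 < c2 &
    forall M : nat, (1 <= M)%N ->
      is_covering (Sigma M) (c1 * (M%:R) `^ (- g)) (E M) /\
      ln ((size (E M))%:R) / ln 2 <= c2 * (M%:R) `^ (1 + h).

Definition real_encodable (Sigma : nat -> set T) (g : R) : Prop :=
  forall h : R, 0 < h -> exists E, encoding Sigma g h E.

Definition encodable (Sigma : nat -> set T) (g : \bar R) : Prop :=
  match g with
  | r%:E => real_encodable Sigma r
  | +oo%E => forall r : R, 0 < r -> real_encodable Sigma r
  | -oo%E => False
  end.

Definition dist_set (f : T) (S : set T) : R := inf [set d f x | x in S].

Definition approx_class (Sigma : nat -> set T) (alpha beta : R) : set T :=
  [set f | (ereal_sup [set ((M%:R `^ alpha) * dist_set f (Sigma M))%:E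
                      | M in [set M : nat | (1 <= M)%N]] <= beta%:E)%E].

End Defs.

From HB Require Import structures.
From mathcomp Require Import all_boot all_order all_algebra.
From mathcomp Require Import all_classical all_reals all_analysis.
From mathcomp Require Import lra.
From Stdlib Require List.
Set Implicit Arguments.
Unset Strict Implicit.
Unset Printing Implicit Defensive.

Import Order.TTheory GRing.Theory Num.Theory.
Local Open Scope classical_set_scope.
Local Open Scope ring_scope.

(* If f is in A^alpha(Sigma, beta) then d(f, Sigma_M) <= beta M^-alpha, and
   the (gamma, h)-encoding covers Sigma_M at radius c1 M^-gamma; hence it covers
   A at radius O(M^-a), a = min(alpha, gamma), with at most 2^(c2 M^(1+h))
   points.  Taking M ~ eps^(-1/a) gives H(A, eps) = O(eps^(-(1+h)/a)), and since
   h > 0 is arbitrary every exponent g < a is admissible. *)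

Lemma In_mapP (A B : Type) (f : A -> B) (s : seq A) (y : B) :
  List.In y (map f s) <-> exists2 x, List.In x s & y = f x.
Proof.
have -> : map f s = List.map f s by elim: s => //= x s ->.
rewrite List.in_map_iff; split=> [[x [<- xs]]|[x xs ->]]; by exists x.
Qed.

Section Coverings.
Variables (R : realType) (T : Type) (d : T -> T -> R).

Lemma optimal_exponent_ge (C : set T) (m : R) :
  (forall g, 0 < g -> g < m -> entropy_bigO d C g) ->
  (m%:E <= optimal_exponent d C)%E.
Proof.
move=> bigO; rewrite leNgt; apply/negP => opt_lt_m.
have opt_ge0 : (0 <= optimal_exponent d C)%E by apply: ereal_sup_ubound; left.
have opt_ge g : 0 < g -> g < m -> (g%:E <= optimal_exponent d C)%E.
  by move=> g_gt0 g_lt_m; apply: ereal_sup_ubound; right; exists g; split => //; apply: bigO.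
move: opt_ge0 opt_lt_m opt_ge; case: (optimal_exponent d C) => [r| |] //.
rewrite !lee_fin !lte_fin => r_ge0 r_lt_m opt_ge.
have := opt_ge ((r + m) / 2); rewrite lee_fin; apply: contraPP => _; lra.
Qed.

Lemma is_covering_le (C : set T) (r r' : R) (X : seq T) :
  r <= r' -> is_covering d C r X -> is_covering d C r' X.
Proof.
move=> r_le [XC covX]; split=> // y Cy.
by have [x Xx dyx] := covX y Cy; exists x => //; apply: le_trans r_le.
Qed.

Lemma metric_entropy_le (C : set T) (eps b : R) (X : seq T) :
  is_covering d C eps X -> ln (size X)%:R / ln 2 <= b ->
  (metric_entropy d C eps <= b%:E)%E.
Proof.
move=> covX logX_le.
have N_le : (covering_number d C eps <= ((size X)%:R)%:E)%E.
  by apply: ereal_inf_lbound; exists X.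
have N_ge0 : (0 <= covering_number d C eps)%E.
  by apply/ereal_infP => _ [Y _ <-]; rewrite lee_fin.
have lnX_ge0 : 0 <= ln (size X)%:R :> R.
  by case: (size X) => [|n]; [rewrite ln0 | apply: ln_ge0; rewrite ler1n].
rewrite /metric_entropy; move: N_le N_ge0.
case: (covering_number d C eps) => [r| |] //; rewrite !lee_fin => r_le r_ge0.
apply: le_trans logX_le; apply: ler_wpM2r; first by rewrite invr_ge0; apply: ln_ge0; rewrite ler1n.
have [->|r_neq0] := eqVneq r 0; first by rewrite ln0.
have r_gt0 : 0 < r by rewrite lt_neqAle eq_sym r_neq0.
by rewrite ler_ln // posrE; apply: lt_le_trans r_le.
Qed.

Hypothesis d_metric : is_metric d.

(* [is_covering] wants centers inside [A]: replacing each center by a nearby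
   point of [A] costs a factor 2 in the radius. *)
Lemma internal_covering (A : set T) (r : R) (E : seq T) :
  A !=set0 -> (forall y, A y -> exists2 x, List.In x E & d y x <= r) ->
  exists2 X : seq T, is_covering d A (2 * r) X & size X = size E.
Proof.
move=> [f0 Af0] covE; have [_ [_ [d_sym d_tri]]] := d_metric.
pose F x := if pselect (exists y, A y /\ d y x <= r) is left near_x
            then projT1 (cid near_x) else f0.
have FP x : A (F x) /\ ((exists y, A y /\ d y x <= r) -> d (F x) x <= r).
  rewrite /F; case: pselect => [near_x|far_x]; last by split => // /far_x.
  by case: (cid near_x) => y [].
exists (map F E); last by rewrite size_map.
split=> [_ /In_mapP[x _ ->]|y Ay]; first exact: (FP x).1.
have [x Ex dyx] := covE y Ay.
exists (F x); first by apply/In_mapP; exists x.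
have dFx := (FP x).2 (ex_intro _ y (conj Ay dyx)).
by apply: le_trans (d_tri y x (F x)) _; rewrite (d_sym x); lra.
Qed.

Lemma dist_set_covering (S : set T) (f : T) (c delta : R) (X : seq T) :
  S !=set0 -> is_covering d S c X -> 0 < delta ->
  exists2 x, List.In x X & d f x <= dist_set d f S + delta + c.
Proof.
move=> [s Ss] [_ covX] delta_gt0; have [_ [_ [_ d_tri]]] := d_metric.
have [_ [y Sy <-] dfy_lt] : exists2 e, [set d f y | y in S] e &
    e < dist_set d f S + delta.
  by apply: inf_lt; [exists (d f s), s | rewrite /dist_set; lra].
have [x Xx dyx] := covX y Sy; exists x => //.
by have := d_tri f y x; lra.
Qed.

End Coverings.

Lemma nat_scale (R : realType) (K eps a : R) :
  0 < a -> 0 < eps -> eps < K ->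
  exists M : nat, [/\ (1 <= M)%N, K * M%:R `^ (- a) <= eps
                    & M%:R <= 2 * (K / eps) `^ a^-1].
Proof.
move=> a_gt0 eps_gt0 eps_lt_K.
set t := (K / eps) `^ a^-1.
have Keps_ge1 : 1 <= K / eps by rewrite ler_pdivlMr // mul1r ltW.
have t_ge1 : 1 <= t.
  by rewrite /t -(powRr0 (K / eps)); apply: ler_powR; rewrite // invr_ge0 ltW.
exists (Num.truncn t).+1; split => //.
- have t_lt : t < (Num.truncn t).+1%:R := truncnS_gt t.
  have Mpow_gt0 : 0 < (Num.truncn t).+1%:R `^ a by apply: powR_gt0.
  rewrite powRN ler_pdivrMr // mulrC -ler_pdivrMr //.
  have -> : K / eps = t `^ a.
    by rewrite /t -powRrM mulVf ?gt_eqF // powRr1 // ltW // divr_gt0 // (lt_trans eps_gt0).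
  by apply: ge0_ler_powR (ltW t_lt); rewrite ?nnegrE ?ler0n // ltW //; lra.
- have trunc_le : (Num.truncn t)%:R <= t by rewrite truncn_le; lra.
  by rewrite -addn1 natrD; lra.
Qed.

Section ApproximationClass.
Variables (R : realType) (T : Type) (d : T -> T -> R).
Hypothesis d_metric : is_metric d.
Variables (Sigma : nat -> set T) (alpha beta : R).
Hypotheses (alpha_gt0 : 0 < alpha) (beta_gt0 : 0 < beta).

Local Notation A := (approx_class d Sigma alpha beta).

Lemma approx_class_dist_le (f : T) (M : nat) :
  A f -> (1 <= M)%N -> dist_set d f (Sigma M) <= beta * M%:R `^ (- alpha).
Proof.
move=> /ereal_supP Af M_ge1.
have := Af _ (ex_intro2 _ _ M M_ge1 erefl); rewrite lee_fin.
have : 0 < M%:R `^ alpha by apply: powR_gt0; rewrite ltr0n.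
by move=> Mpow_gt0; rewrite powRN mulrC -ler_pdivlMr.
Qed.

Lemma approx_class_covering (gam c : R) (M : nat) (Y : seq T) :
  A !=set0 -> Sigma M !=set0 -> (1 <= M)%N -> 0 < gam -> 0 < c ->
  is_covering d (Sigma M) (c * M%:R `^ (- gam)) Y ->
  exists2 X, is_covering d A (2 * ((2 * beta + c) * M%:R `^ (- Order.min alpha gam))) X
           & size X = size Y.
Proof.
move=> A_ne S_ne M_ge1 gam_gt0 c_gt0 covY.
set a := Order.min alpha gam.
have M_ge1R : 1 <= (M%:R : R) by rewrite ler1n.
have powM_le e : a <= e -> M%:R `^ (- e) <= M%:R `^ (- a).
  by move=> a_le; apply: ler_powR => //; rewrite lerN2.
have alpha_pow : M%:R `^ (- alpha) <= M%:R `^ (- a).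
  by apply: powM_le; rewrite ge_min lexx.
have gam_pow : M%:R `^ (- gam) <= M%:R `^ (- a).
  by apply: powM_le; rewrite ge_min lexx orbT.
apply: internal_covering => // f Af.
have delta_gt0 : 0 < beta * M%:R `^ (- alpha) by rewrite mulr_gt0 // powR_gt0 // ltr0n.
have [x Yx dfx] := dist_set_covering d_metric f S_ne covY delta_gt0.
exists x => //; apply: le_trans dfx _.
have := approx_class_dist_le Af M_ge1.
have := ler_wpM2l (ltW beta_gt0) alpha_pow.
have := ler_wpM2l (ltW c_gt0) gam_pow.
rewrite mulrDl; lra.
Qed.

Lemma approx_class_entropy_bigO (gam g : R) :
  (forall M, (1 <= M)%N -> Sigma M !=set0) -> A !=set0 ->
  0 < gam -> real_encodable d Sigma gam ->
  0 < g -> g < Order.min alpha gam -> entropy_bigO d A g.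
Proof.
move=> S_ne A_ne gam_gt0 enc g_gt0 g_lt.
set a := Order.min alpha gam in g_lt *.
have a_gt0 : 0 < a by rewrite lt_min alpha_gt0 gam_gt0.
(* The slack h = a/g - 1 makes M^(1+h) = M^(a/g) ~ eps^(-1/g). *)
have h_gt0 : 0 < a / g - 1 by rewrite subr_gt0 ltr_pdivlMr // mul1r.
have [E [c1 c1_gt0 [c2 c2_gt0 encE]]] := enc _ h_gt0.
rewrite addrC subrK in encE.
set K := 2 * (2 * beta + c1).
have K_gt0 : 0 < K by rewrite /K !(mulr_gt0, addr_gt0).
exists (c2 * 2 `^ (a / g) * K `^ g^-1), K => //.
move=> eps eps_gt0 eps_lt_K.
have [M [M_ge1 KM_le M_le]] := nat_scale a_gt0 eps_gt0 eps_lt_K.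
have [covE sizeE] := encE M M_ge1.
have [X covX sizeX] := approx_class_covering A_ne (S_ne M M_ge1) M_ge1 gam_gt0 c1_gt0 covE.
have covA : is_covering d A eps X by apply: is_covering_le covX; rewrite mulrA.
apply: (metric_entropy_le covA).
rewrite sizeX; apply: le_trans sizeE _; rewrite -!mulrA; apply: ler_wpM2l; first exact: ltW.
have Keps_ge0 : 0 <= K / eps by rewrite divr_ge0 // ltW // (lt_trans eps_gt0).
have scale_pow : ((K / eps) `^ a^-1) `^ (a / g) = K `^ g^-1 * eps `^ (- g^-1).
  rewrite -powRrM mulrA mulVf ?gt_eqF // mul1r powRM ?invr_ge0 ?ltW //.
  by rewrite -(powR_inv1 (ltW eps_gt0)) -powRrM mulN1r.
rewrite -scale_pow -powRM ?powR_ge0 //.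
by apply: ge0_ler_powR M_le; rewrite ?nnegrE ?mulr_ge0 ?powR_ge0 ?invr_ge0 // ltW.
Qed.

End ApproximationClass.

Theorem mainTheorem9 (R : realType) (T : Type) (d : T -> T -> R)
  (gamma : \bar R) (Sigma : nat -> set T) (alpha beta : R) :
  is_metric d ->
  (0 < gamma)%E ->
  (forall M : nat, (1 <= M)%N -> Sigma M !=set0) ->
  encodable d Sigma gamma ->
  0 < alpha -> 0 < beta ->
  approx_class d Sigma alpha beta !=set0 ->
  (Order.min alpha%:E gamma <= optimal_exponent d (approx_class d Sigma alpha beta))%E.
Proof.
move=> d_metric gamma_gt0 S_ne enc alpha_gt0 beta_gt0 A_ne.
case: gamma gamma_gt0 enc => [gam| |] //= gam_gt0 enc.
- rewrite lte_fin in gam_gt0; rewrite -EFin_min.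
  by apply: optimal_exponent_ge => g; apply: approx_class_entropy_bigO.
- rewrite min_l ?leey //; apply: optimal_exponent_ge => g.
  have := approx_class_entropy_bigO d_metric alpha_gt0 beta_gt0 S_ne A_ne alpha_gt0.
  by rewrite minxx; apply; apply: enc.
Qed.
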